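(* Let $m\ge2$ and $t\ge1$ be integers. There exists $a\in\{1,2,\dots,m\}$ with $f_2^t(a)=a$ if and only if $\gcd(m+1,2^t+1)>1$ or $\gcd(m+1,2^t-1)>1$. Moreover, every $a\in\{1,\dots,m\}$ with $f_2^t(a)=a$ can be written as $a=\frac{\xi(m+1)}{2^t+1}$ or $a=\frac{\xi(m+1)}{2^t-1}$ for some odd integer $\xi$ with $1\le\xi<2^t$.
   Context: For an integer $m\ge2$, $X=\{0,1,\dots,m^2-1\}$, each element written with exactly two base-$m$ digits (leading zeros allowed), and $f(x)=D(x)-A(x)$ is the two-digit base-$m$ Kaprekar map ($D(x)$, $A(x)$: digits of $x$ in nonincreasing, resp. nondecreasing, order). The map $f_2:\{0,1,\dots,m\}\to\{0,1,\dots,m\}$ is defined by $f(a(m-1))=f_2(a)(m-1)$; explicitly $f_2(0)=0$ and $f_2(a)=|2a-m-1|$ for $1\le a\le m$. $f_2^t$ denotes the $t$-fold iterate. *)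

From mathcomp Require Import all_boot.

(* f_2 : {0..m} -> {0..m}, f_2(0) = 0, f_2(a) = |2a - m - 1| for 1 <= a <= m.
   The absolute difference on nat is written as the sum of the two truncated
   differences. *)
Definition absdiff (x y : nat) : nat := (x - y) + (y - x).

Definition f2 (m a : nat) : nat :=
  if a == 0 then 0 else absdiff (2 * a) (m + 1).

Definition f2_iter (m t a : nat) : nat := iter t (f2 m) a.

(* The whole argument rests on the identity f2(b) = ±(2b - N) for 1 <= b <= m.
   Iterating it, every positive iterate is f2^k(b) = ±2^k b + c N with c an ODD
   integer (for k >= 1).
   - Fixed points: f2^t(a) = a gives a (2^t ∓ 1) = xi N with xi = ∓c odd, and
     0 < a < N bounds xi < 2^t.  Such an identity with 0 < a < N forces
     gcd(N, 2^t ∓ 1) > 1, which is the forward implication.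
   - Converse: let g = gcd(N, 2^t ± 1) > 1; g is odd and N = d g.  The positive
     multiples of d below N are stable under f2 (2y = N is impossible since g
     is odd), and 2^t d ≡ ∓d (mod N), so f2^t(d) is d or N - d.  Both have the
     same image under f2, hence f2(d) is a fixed point of f2^t. *)

From Stdlib Require Import ZArith Lia.
From mathcomp Require Import all_boot zify.

Section SignedIterates.

Variable m : nat.

Lemma f2_le b : b <= m -> f2 m b <= m.
Proof. by rewrite /f2 /absdiff; case: eqP => b0; lia. Qed.

Lemma f2_iter_le k b : b <= m -> f2_iter m k b <= m.
Proof. by move=> hb; elim: k => //= k IH; exact: f2_le. Qed.

Lemma f2_signed b : 0 < b <= m ->
  exists2 eps, (eps = 1 \/ eps = -1)%Z &
    Z.of_nat (f2 m b) = (eps * (2 * Z.of_nat b - Z.of_nat (m + 1)))%Z.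
Proof.
move=> hb; rewrite /f2 /absdiff; case: eqP => [|_]; first lia.
have [le_N2b | lt_2bN] := leqP (m + 1) (2 * b).
- by exists 1%Z; [left | lia].
- by exists (-1)%Z; [right | lia].
Qed.

(* A positive (k+1)-st iterate is ±2^(k+1) b plus an odd multiple of N;
   positivity of the last iterate forces all earlier ones to be positive,
   since 0 is a fixed point of f2. *)
Lemma f2_iter_signed k b : 0 < b <= m -> 0 < f2_iter m k.+1 b ->
  exists s e, (s = 1 \/ s = -1)%Z /\
    Z.of_nat (f2_iter m k.+1 b) =
      (s * Z.of_nat (2 ^ k.+1) * Z.of_nat b + (2 * e + 1) * Z.of_nat (m + 1))%Z.
Proof.
move=> hb; elim: k => [|k IH] hpos.
  have [eps heps E] := f2_signed b hb.
  change (f2_iter m 1 b) with (f2 m b); rewrite E expn1.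
  by case: heps => ->; [exists 1%Z, (-1)%Z | exists (-1)%Z, 0%Z]; split; lia.
rewrite /f2_iter iterS -/(f2_iter m k.+1 b) in hpos *.
set y := f2_iter m k.+1 b in hpos IH *.
have y_pos : 0 < y by case: y hpos {IH} => //; rewrite /f2 eqxx.
have y_le : y <= m by apply: f2_iter_le; case/andP: hb.
have [s [e [hs Ey]]] := IH y_pos.
have [eps heps E] := f2_signed y (ltac:(by rewrite y_pos y_le)).
have P2 : Z.of_nat (2 ^ k.+2) = (2 * Z.of_nat (2 ^ k.+1))%Z by rewrite expnS; lia.
rewrite E Ey P2.
case: heps => ->; [exists s, (2 * e)%Z | exists (- s)%Z, (- 2 * e - 1)%Z];
  split; lia.
Qed.

End SignedIterates.

Lemma odd_cofactor (a N Q : nat) (e : Z) : 0 < a < N ->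
  Z.of_nat (a * Q) = ((2 * e + 1) * Z.of_nat N)%Z ->
  exists xi, [/\ odd xi, xi < Q & a * Q = xi * N].
Proof.
move=> ha E.
have e_ge0 : (0 <= e)%Z by nia.
exists (2 * Z.to_nat e + 1); split.
- by rewrite addn1 /= oddM.
- nia.
- lia.
Qed.

Lemma fixed_point_cofactor m t a : 1 <= t -> 1 <= a <= m -> f2_iter m t a = a ->
  exists xi, [/\ odd xi, 1 <= xi < 2 ^ t &
    (a * (2 ^ t + 1) = xi * (m + 1) \/ a * (2 ^ t - 1) = xi * (m + 1))].
Proof.
case: t => // k _ ha hfix.
have [s [e [hs E]]] := f2_iter_signed m k a ha (ltac:(by rewrite hfix; case/andP: ha)).
rewrite hfix in E.
have P_even : odd (2 ^ k.+1) = false by rewrite oddX.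
have P_pos : 0 < 2 ^ k.+1 by rewrite expn_gt0.
case: hs => hs; subst s.
- have [xi [xi_odd xi_lt Exi]] :=
    odd_cofactor a (m + 1) (2 ^ k.+1 - 1) (- e - 1) (ltac:(lia)) (ltac:(lia)).
  exists xi; split=> //; last by right.
  by rewrite odd_gt0 //=; lia.
- have [xi [xi_odd xi_lt Exi]] :=
    odd_cofactor a (m + 1) (2 ^ k.+1 + 1) e (ltac:(lia)) (ltac:(lia)).
  exists xi; split=> //; last by left.
  rewrite odd_gt0 //=; move: xi_lt; rewrite addn1 ltnS leq_eqVlt.
  by case/orP=> [/eqP xiE | //]; rewrite xiE P_even in xi_odd.
Qed.

(* An identity a Q = xi N with 0 < a < N is impossible when N and Q are
   coprime, since N would then divide a. *)
Lemma gcd_gt1_of_cofactor N Q a xi : 0 < a < N -> a * Q = xi * N -> 1 < gcdn N Q.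
Proof.
move=> /andP[a_pos a_lt] E.
rewrite ltnNge; apply/negP => g_le1.
have cop : coprime N Q by rewrite /coprime eqn_leq g_le1 gcdn_gt0; lia.
have : N %| a * Q by rewrite E dvdn_mull.
by rewrite Gauss_dvdl // => /(dvdn_leq a_pos); lia.
Qed.

Lemma residue_pm (y d N u : Z) : (0 < y < N -> 0 < d < N ->
  y = u * N + d \/ y = u * N - d -> y = d \/ y = N - d)%Z.
Proof.
move=> hy hd [E|E].
- have u0 : u = 0%Z by nia.
  by left; subst u; lia.
- have u1 : u = 1%Z by nia.
  by right; subst u; lia.
Qed.

Section DivisorOrbit.

Variables m d g : nat.
Hypotheses (dg_N : d * g = m + 1) (g_odd : odd g) (g_gt1 : 1 < g).

Let d_pos : 0 < d. Proof. by move: dg_N; rewrite lt0n; case: eqP => // ->; rewrite addn1. Qed.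

(* The positive multiples of d below N = d g are stable under f2:
   2y = N would make g = 2 (y / d) even. *)
Lemma f2_multiple y : 0 < y <= m -> d %| y -> 0 < f2 m y <= m /\ d %| f2 m y.
Proof.
move=> hy /dvdnP[j yE].
have hf : f2 m y = absdiff (2 * y) (m + 1) by rewrite /f2; case: eqP => //; lia.
have d_N : d %| m + 1 by rewrite -dg_N dvdn_mulr.
have d_2y : d %| 2 * y by rewrite yE mulnA dvdn_mull.
split; last by rewrite hf /absdiff dvdn_add // dvdn_sub.
rewrite f2_le ?andbT; last by case/andP: hy.
rewrite hf /absdiff; apply/negPn/negP; rewrite -leqNgt leqn0 => /eqP E0.
have gE : g = 2 * j.
  by apply/eqP; rewrite -(eqn_pmul2l d_pos); apply/eqP; nia.
by move: g_odd; rewrite gE oddM.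
Qed.

Lemma iter_multiple k : 0 < f2_iter m k d <= m /\ d %| f2_iter m k d.
Proof.
elim: k => [|k [hk dk]]; last by rewrite /f2_iter iterS; exact: f2_multiple.
by split; [rewrite /= d_pos; nia | exact: dvdnn].
Qed.

(* Since 2^t ≡ ∓1 (mod g), the t-th iterate of d is ±d modulo N. *)
Lemma iter_returns t : 1 <= t -> g %| 2 ^ t + 1 \/ g %| 2 ^ t - 1 ->
  f2_iter m t d = d \/ f2_iter m t d = m + 1 - d.
Proof.
case: t => // k _ hdiv.
have [/andP[hpos hle] _] := iter_multiple k.+1.
have d_le : d <= m by nia.
have [s [e [hs E]]] := f2_iter_signed m k d (ltac:(lia)) hpos.
have P_pos : 0 < 2 ^ k.+1 by rewrite expn_gt0.
have [r [delta [hdelta P_E]]] : exists r delta, (delta = 1 \/ delta = -1)%Z /\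
    Z.of_nat (2 ^ k.+1) = (Z.of_nat r * Z.of_nat g - delta)%Z.
  by case: hdiv => /dvdnP[r rE]; exists r; [exists 1%Z | exists (-1)%Z]; split; lia.
have NE : Z.of_nat (m + 1) = (Z.of_nat d * Z.of_nat g)%Z by lia.
suff : (Z.of_nat (f2_iter m k.+1 d) = Z.of_nat d \/
        Z.of_nat (f2_iter m k.+1 d) = Z.of_nat (m + 1) - Z.of_nat d)%Z by lia.
apply: (residue_pm _ _ _ (s * Z.of_nat r + 2 * e + 1)); [lia | lia |].
rewrite E P_E NE.
by case: hs => ->; case: hdelta => ->; [right | left | left | right]; lia.
Qed.

(* f2(d) = f2(N - d), so f2(d) is fixed by f2^t in both cases above. *)
Lemma fixed_point_of_divisor t : 1 <= t -> g %| 2 ^ t + 1 \/ g %| 2 ^ t - 1 ->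
  exists a, 1 <= a <= m /\ f2_iter m t a = a.
Proof.
move=> ht hdiv; exists (f2 m d); split; first by have [] := iter_multiple 1.
have d_le : d <= m by nia.
rewrite /f2_iter -iterSr iterS -/(f2_iter m t d).
case: (iter_returns t ht hdiv) => -> //.
by rewrite /f2 /absdiff; do 2 case: eqP; lia.
Qed.

End DivisorOrbit.

Lemma fixed_point_of_gcd m t Q : 1 <= t -> Q = 2 ^ t + 1 \/ Q = 2 ^ t - 1 ->
  1 < gcdn (m + 1) Q -> exists a, 1 <= a <= m /\ f2_iter m t a = a.
Proof.
move=> ht hQ g_gt1.
have Q_odd : odd Q.
  have P_even : odd (2 ^ t) = false by rewrite oddX orbF eqn0Ngt ht.
  have P_pos : 0 < 2 ^ t by rewrite expn_gt0.
  by case: hQ => ->; rewrite ?oddD ?oddB // P_even.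
apply: (fixed_point_of_divisor m ((m + 1) %/ gcdn (m + 1) Q) (gcdn (m + 1) Q)) => //.
- by rewrite divnK // dvdn_gcdl.
- exact: dvdn_odd (dvdn_gcdr _ _) Q_odd.
- by case: hQ => <-; [left | right]; exact: dvdn_gcdr.
Qed.

Theorem theorem3p3p1 (m t : nat) (hm : 2 <= m) (ht : 1 <= t) :
  ((exists a, 1 <= a <= m /\ f2_iter m t a = a) <->
     (1 < gcdn (m + 1) (2 ^ t + 1) \/ 1 < gcdn (m + 1) (2 ^ t - 1)))
  /\
  (forall a, 1 <= a <= m -> f2_iter m t a = a ->
     exists xi, [/\ odd xi, 1 <= xi < 2 ^ t &
        (a * (2 ^ t + 1) = xi * (m + 1) \/ a * (2 ^ t - 1) = xi * (m + 1))]).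
Proof.
split; last by move=> a; exact: fixed_point_cofactor.
split.
- case=> a [ha hfix].
  have [xi [_ _ [E | E]]] := fixed_point_cofactor m t a ht ha hfix;
    [left | right]; apply: gcd_gt1_of_cofactor E; lia.
- by case=> hg; apply: (fixed_point_of_gcd m t _ ht _ hg); [left | right].
Qed.
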